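(* Let $\Delta_1,\Delta_2,\Delta_3$ be simplicial complexes on $[n]$. For nonempty $A,B\subseteq[n]$ set $\Delta_{A,B}=(A*\Delta_1)\cup(B*\Delta_2)\cup((A\cup B)*\Delta_3)$. If $A,B,A',B'\subseteq[n]$ are nonempty with $A\cap B=\emptyset$, $A'\cap B'=\emptyset$, and neither $A\cup B$ nor $A'\cup B'$ meets the vertex set of $\Delta_1\cup\Delta_2\cup\Delta_3$, then $$\tilde H_i(\Delta_{A,B};\mathbb{K})\cong\tilde H_i(\Delta_{A',B'};\mathbb{K})\quad\text{for all } i>0.$$
   Context: A simplicial complex on $[n]$ is a finite family of subsets of $[n]$ closed under taking subsets (singletons need not belong to it); its vertex set is the union of its faces. For a nonempty $A\subseteq[n]$ and a simplicial complex $\Delta$ on $[n]$, the cone $A*\Delta$ is the simplicial complex whose facets are the sets $A\cup F$ with $F$ a facet of $\Delta$. $\tilde H_i(\,\cdot\,;\mathbb{K})$ denotes reduced simplicial homology with coefficients in the field $\mathbb{K}$. *)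

From mathcomp Require Import all_boot all_order all_algebra.
Set Implicit Arguments. Unset Strict Implicit. Unset Printing Implicit Defensive.
Import GRing.Theory.
Local Open Scope ring_scope.

Definition is_simplicial_complex n (D : {set {set 'I_n}}) : Prop :=
  forall s t : {set 'I_n}, s \in D -> t \subset s -> t \in D.

Definition vertex_set n (D : {set {set 'I_n}}) : {set 'I_n} :=
  \bigcup_(s in D) s.

(* cone A * D: the complex generated by the sets A :|: F, F a face (equivalently facet) of D *)
Definition cone n (A : {set 'I_n}) (D : {set {set 'I_n}}) : {set {set 'I_n}} :=
  [set t : {set 'I_n} | [exists s in D, t \subset A :|: s]].

Definition DeltaAB n (D1 D2 D3 : {set {set 'I_n}}) (A B : {set 'I_n}) :=
  cone A D1 :|: cone B D2 :|: cone (A :|: B) D3.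

(* Chains: row vectors indexed by all subsets of 'I_n (via enum_val);
   the i-chains of D are supported on faces of D of cardinality i+1
   (i = -1 not needed here; bnd 0 is the augmentation onto the empty face). *)
Notation NS n := #|{set 'I_n}|.

(* boundary matrix d_i : C_i -> C_{i-1}, acting on row vectors (u *m d) *)
Definition bnd (K : fieldType) n (D : {set {set 'I_n}}) (i : nat) : 'M[K]_(NS n) :=
  \matrix_(r, c)
    (let s := enum_val r in let t := enum_val c in
     if [&& s \in D, t \in D, #|s| == i.+1, #|t| == i & t \subset s]
     then \sum_(v in s :\: t) (-1) ^+ #|[set w in s | (val w < val v)%N]|
     else 0).

Definition chain_proj (K : fieldType) n (D : {set {set 'I_n}}) (i : nat) : 'M[K]_(NS n) :=
  \matrix_(r, c) ((r == c) && (enum_val r \in D) && (#|enum_val r| == i.+1))%:R.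

(* reduced cycles Z_i, boundaries B_i, and reduced homology H_i = Z_i / B_i,
   represented by a complement of B_i in Z_i *)
Definition cycles (K : fieldType) n D i : 'M[K]_(NS n) :=
  (chain_proj K D i :&: kermx (bnd K D i))%MS.
Definition boundaries (K : fieldType) n D i : 'M[K]_(NS n) := bnd K D i.+1.
Definition rhomology (K : fieldType) n (D : {set {set 'I_n}}) (i : nat) : 'M[K]_(NS n) :=
  (cycles K D i :\: boundaries K D i)%MS.

Definition mxspace_iso (K : fieldType) m (U V : 'M[K]_m) : Prop :=
  exists M : 'M[K]_m, M \in unitmx /\ (U *m M == V)%MS.

From mathcomp Require Import all_boot all_order all_algebra all_fingroup.
From mathcomp Require Import zify.
Set Implicit Arguments. Unset Strict Implicit. Unset Printing Implicit Defensive.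
Import GRing.Theory.
Local Open Scope ring_scope.

(* Only dimensions matter: subspaces of equal dimension are isomorphic, and
   dim H_i = dim C_i - rank d_i - rank d_(i+1).  An elementary collapse (a facet
   S together with a free face S - v) lowers dim C_k, dim C_(k+1) and rank d_(k+1)
   by one each, so it preserves every H_i.  If x <> a and adding a to a face
   containing x always gives a face, the faces containing x can be collapsed away
   pair by pair.  In Delta_(A,B) this applies to every x in A - a (and B - b),
   because x is a vertex of no Delta_j; so Delta_(A,B) has the homology of
   Delta_({a},{b}).  Finally a permutation of [n] fixing the vertices of the Delta_j
   and sending a, b to a', b' maps Delta_({a},{b}) onto Delta_({a'},{b'}); it acts
   on chains by a signed permutation matrix commuting with the boundary maps. *)

Lemma card_setD1S (T : finType) (s : {set T}) v k : v \in s -> #|s| = k.+1 -> #|s :\ v| = k.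
Proof. by move=> vs; rewrite (cardsD1 v) vs => -[]. Qed.

Lemma setDD1 (T : finType) (s : {set T}) v : v \in s -> s :\: (s :\ v) = [set v].
Proof. by move=> vs; rewrite setDDr setDv set0U; apply/setIidPr; rewrite sub1set. Qed.

Lemma setD1_of_card (T : finType) (s t : {set T}) :
  t \subset s -> #|s| = #|t|.+1 -> exists2 v, v \in s & t = s :\ v.
Proof.
move=> ts cs; have /cards1P[v svE] : #|s :\: t| == 1%N.
  by rewrite cardsD (setIidPr ts) cs subSnn.
exists v; first by have := set11 v; rewrite -svE => /setDP[].
by rewrite -svE setDDr setDv set0U (setIidPr ts).
Qed.

Lemma setD1_sandwich (T : finType) (S t : {set T}) (a : T) :
  t \subset S -> S :\ a \subset t -> t = S \/ t = S :\ a.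
Proof.
move=> tS Sat; case: (boolP (a \in t)) => [at_|nat]; [left | right]; apply/eqP.
  by rewrite eqEsubset tS -(setD1K (subsetP tS a at_)) subUset sub1set at_.
by rewrite eqEsubset Sat subsetD1 tS nat.
Qed.

Lemma card_set_sum (T : finType) (s : {set T}) (P : pred T) :
  #|[set w in s | P w]| = (\sum_(w in s) P w)%N.
Proof. by rewrite -sum1dep_card big_mkcondr /=; apply: eq_bigr => w _; case: (P w). Qed.

Lemma disjoint_setU_mem (T : finType) (A B C : {set T}) a b :
  a \in A -> b \in B -> [disjoint A & B] -> [disjoint A :|: B & C] ->
  [/\ a \notin C, b \notin C & a != b].
Proof.
move=> aA bB AB ABC; rewrite !(disjointFr ABC) ?inE ?aA ?bB ?orbT //.
by split=> //; apply: contraTneq bB => <-; rewrite (disjointFr AB aA).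
Qed.

Lemma eq_enum_rank (T : finType) (r : 'I_#|T|) (x : T) :
  (r == enum_rank x) = (enum_val r == x).
Proof. by rewrite -(inj_eq enum_val_inj) enum_rankK. Qed.

Lemma mxspace_iso_rank (K : fieldType) m (U V : 'M[K]_m) :
  \rank U = \rank V -> mxspace_iso U V.
Proof.
have col_ebase_full (W : 'M[K]_m) : row_full (col_ebase W).
  by rewrite row_full_unit col_ebase_unit.
have ebase_eqmx (W : 'M[K]_m) : (W :=: (pid_mx (\rank W) : 'M_m) *m row_ebase W)%MS.
  by rewrite -{1}(mulmx_ebase W) -mulmxA; exact: eqmxMfull.
move=> rUV; exists (invmx (row_ebase U) *m row_ebase V); split.
  by rewrite unitmx_mul unitmx_inv !row_ebase_unit.
apply/eqmxP; rewrite -{1}(mulmx_ebase U) !mulmxA mulmxK ?row_ebase_unit //.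
rewrite -mulmxA rUV; exact: eqmx_trans (eqmxMfull _ _) (eqmx_sym (ebase_eqmx V)).
Qed.

Section ZeroRow.
Variables (F : fieldType) (m p : nat).
Implicit Types (M : 'M[F]_(m, p)) (j : 'I_m).

Definition zero_row M j : 'M[F]_(m, p) := \matrix_(r, c) (if r == j then 0 else M r c).

Lemma row_zero_row M j r : row r (zero_row M j) = if r == j then 0 else row r M.
Proof.
by apply/matrixP => a b; case: eqVneq => [->|rj]; rewrite !mxE ?eqxx ?(negPf rj).
Qed.

Lemma row_sub_zero_row M j r : r != j -> (row r M <= zero_row M j)%MS.
Proof. by move=> rj; have := row_zero_row M j r; rewrite (negPf rj) => <-; exact: row_sub. Qed.

Lemma zero_row_sub M j : (zero_row M j <= M)%MS.
Proof.
by apply/row_subP => r; rewrite row_zero_row; case: eqP => _; rewrite ?sub0mx ?row_sub.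
Qed.

Lemma zero_row_eqmx M j : (zero_row M j + row j M :=: M)%MS.
Proof.
apply/eqmxP; rewrite addsmx_sub zero_row_sub row_sub /=.
apply/row_subP => r; case: (eqVneq r j) => [->|rj]; first exact: addsmxSr.
exact: submx_trans (row_sub_zero_row M rj) (addsmxSl _ _).
Qed.

Lemma zero_row_id M j : row j M = 0 -> zero_row M j = M.
Proof.
move/matrixP=> Mj0; apply/matrixP => r c; rewrite mxE; case: eqP => // ->.
by have := Mj0 0 c; rewrite !mxE.
Qed.

Lemma mxrank_zero_row M j :
  (row j M <= zero_row M j)%MS -> \rank (zero_row M j) = \rank M.
Proof. by move/addsmx_idPl => eqM; rewrite -eqM zero_row_eqmx. Qed.

Lemma mxrank_zero_row_pivot M j c : M j c != 0 -> (forall r, r != j -> M r c = 0) ->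
  \rank M = (\rank (zero_row M j)).+1.
Proof.
move=> Mjc_neq0 Mc0.
have col_c0 (x : 'rV_p) : (x <= zero_row M j)%MS -> x 0 c = 0.
  case/submxP=> y ->; rewrite mxE big1 // => r _; rewrite mxE.
  by case: eqVneq => [|/Mc0 ->]; rewrite mulr0.
have disj : (zero_row M j :&: row j M = 0)%MS.
  apply/eqP; rewrite -submx0; apply/rV_subP => x; rewrite sub_capmx submx0.
  case/andP=> /col_c0 xc0 /sub_rVP[a xE]; move: xc0; rewrite xE !mxE.
  by move/eqP; rewrite mulf_eq0 (negPf Mjc_neq0) orbF => /eqP->; rewrite scale0r.
have rank_row : \rank (row j M) = 1%N.
  rewrite rank_rV; case: eqP => // /matrixP/(_ 0 c); rewrite !mxE => Mjc0.
  by rewrite Mjc0 eqxx in Mjc_neq0.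
by rewrite -{1}(zero_row_eqmx M j) mxrank_disjoint_sum // rank_row addn1.
Qed.

Lemma row_sub_zero_row_rel (x : 'rV_m) M j :
  x *m M = 0 -> x 0 j != 0 -> (row j M <= zero_row M j)%MS.
Proof.
rewrite mulmx_sum_row (bigD1 j) //= => /eqP; rewrite addr_eq0 => /eqP rowjE xj_neq0.
have -> : row j M = - (x 0 j)^-1 *: \sum_(r | r != j) x 0 r *: row r M.
  by rewrite scaleNr -scalerN -rowjE scalerA mulVf // scale1r.
by apply/scalemx_sub/summx_sub => r rj; apply/scalemx_sub/row_sub_zero_row.
Qed.

End ZeroRow.

Section Boundary.
Variables (K : fieldType) (n : nat).
Implicit Types (D : {set {set 'I_n}}) (s t u : {set 'I_n}) (v w : 'I_n).

Definition face_sign s v : K := (-1) ^+ #|[set w in s | (val w < val v)%N]|.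

Definition bnd_coef D i s t : K :=
  if [&& s \in D, t \in D, #|s| == i.+1, #|t| == i & t \subset s]
  then \sum_(v in s :\: t) face_sign s v else 0.

Lemma bndE D i r c : bnd K D i r c = bnd_coef D i (enum_val r) (enum_val c).
Proof. by rewrite mxE. Qed.

Lemma face_sign_neq0 s v : face_sign s v != 0.
Proof. by rewrite expf_neq0 // oppr_eq0 oner_eq0. Qed.

Lemma face_sign_setD1_gt s v w : (val v < val w)%N -> face_sign (s :\ w) v = face_sign s v.
Proof.
move=> lt_vw; rewrite /face_sign.
suff -> : [set x in s :\ w | (val x < val v)%N] = [set x in s | (val x < val v)%N] by [].
apply/setP => x; rewrite !inE; case: (ltnP (val x) (val v)) => [lt_xv|]; rewrite ?andbF //.
by rewrite -val_eqE (ltn_eqF (ltn_trans lt_xv lt_vw)).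
Qed.

Lemma face_sign_setD1_lt s v w : v \in s -> (val v < val w)%N ->
  face_sign (s :\ v) w = - face_sign s w.
Proof.
move=> vs lt_vw; rewrite /face_sign.
have -> : [set x in s | (val x < val w)%N] = v |: [set x in s :\ v | (val x < val w)%N].
  by apply/setP => x; rewrite !inE; case: eqP => [->|]; rewrite ?vs ?lt_vw.
by rewrite cardsU1 !inE eqxx /= add1n exprS mulN1r opprK.
Qed.

Lemma bnd_coef_setD1 D i s v : s \in D -> s :\ v \in D -> #|s| = i.+1 -> v \in s ->
  bnd_coef D i s (s :\ v) = face_sign s v.
Proof.
move=> sD svD cs vs.
by rewrite /bnd_coef sD svD cs (card_setD1S vs cs) !eqxx subD1set setDD1 // big_set1.
Qed.

Lemma bnd_coef_neq0 D i s t : bnd_coef D i s t != 0 ->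
  [/\ s \in D, t \in D, #|s| = i.+1, #|t| = i & exists2 v, v \in s & t = s :\ v].
Proof.
rewrite /bnd_coef; case: and5P => [[sD tD /eqP cs /eqP ct ts] _|]; last by rewrite eqxx.
by split=> //; apply: setD1_of_card; rewrite ?cs ?ct.
Qed.

Lemma bnd_coef_mul_neq0 D i s t u : bnd_coef D i.+1 s t * bnd_coef D i t u != 0 ->
  [/\ s \in D, u \in D, #|s| = i.+2, #|u| = i & u \subset s] /\
  exists2 x, x \in s :\: u & t = s :\ x.
Proof.
rewrite mulf_eq0 negb_or => /andP[/bnd_coef_neq0[sD _ cs _ [x xs ->]]].
case/bnd_coef_neq0=> _ uD _ cu [y _ uE].
have us : u \subset s by rewrite uE (subset_trans (subD1set _ y) (subD1set s x)).
by split=> //; exists x; rewrite // inE xs andbT uE !inE eqxx andbF.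
Qed.

Lemma sum_bnd_coef_mul_eq0 D i s u : is_simplicial_complex D ->
  \sum_t bnd_coef D i.+1 s t * bnd_coef D i t u = 0.
Proof.
move=> cD.
have [t0 /bnd_coef_mul_neq0[[sD uD cs cu us] _] | no_term] :=
  pickP [pred t | bnd_coef D i.+1 s t * bnd_coef D i t u != 0]; last first.
  by rewrite big1 // => t _; apply/eqP/negbFE/no_term.
have /cards2P[v [w [vw suE]]] : #|s :\: u| == 2.
  by rewrite cardsD (setIidPr us) cs cu -addn2 addKn.
wlog lt_vw : v w vw suE / (val v < val w)%N.
  move=> wlog_vw; case: (ltngtP (val v) (val w)) => [||/val_inj vw_eq]; first exact: wlog_vw.
  - by apply: wlog_vw; rewrite 1?eq_sym // suE setUC.
  - by rewrite vw_eq eqxx in vw.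
have [vs vu] : v \in s /\ v \notin u by have := set21 v w; rewrite -suE => /setDP.
have [ws wu] : w \in s /\ w \notin u by have := set22 v w; rewrite -suE => /setDP.
have uE (x y : 'I_n) : s :\: u = [set x; y] -> u = (s :\ x) :\ y.
  by move=> suE'; rewrite setDDl -suE' setDDr setDv set0U (setIidPr us).
have swD : s :\ w \in D by apply: cD sD _; exact: subD1set.
have svD : s :\ v \in D by apply: cD sD _; exact: subD1set.
have coef_w : bnd_coef D i (s :\ w) u = face_sign (s :\ w) v.
  have uEw : u = s :\ w :\ v by apply: uE; rewrite suE setUC.
  by rewrite uEw bnd_coef_setD1 -?uEw ?(card_setD1S ws cs) // !inE vs vw.
have coef_v : bnd_coef D i (s :\ v) u = face_sign (s :\ v) w.
  have uEv : u = s :\ v :\ w by exact: uE.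
  by rewrite uEv bnd_coef_setD1 -?uEv ?(card_setD1S vs cs) // !inE ws eq_sym vw.
have sv_neq_sw : s :\ v != s :\ w.
  by apply/eqP => /setP/(_ v); rewrite !inE eqxx vs vw.
(* Only [t = s :\ w] and [t = s :\ v] contribute, and with opposite signs. *)
rewrite (bigD1 (s :\ w)) // (bigD1 (s :\ v)) /= ?sv_neq_sw // big1 ?addr0; last first.
  move=> t /andP[tw tv]; apply/eqP/negbNE/negP => /bnd_coef_mul_neq0[_ [x]].
  by rewrite suE !inE => /orP[] /eqP-> tE; rewrite tE eqxx ?andbF in tw tv.
rewrite !bnd_coef_setD1 // coef_w coef_v face_sign_setD1_gt // face_sign_setD1_lt //.
by rewrite mulrN mulrC subrr.
Qed.

Lemma bnd_mul_bnd D i : is_simplicial_complex D -> bnd K D i.+1 *m bnd K D i = 0.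
Proof.
move=> cD; apply/matrixP => r c; rewrite !mxE.
under eq_bigr do rewrite !bndE.
rewrite -(big_enum_val (fun t => bnd_coef D i.+1 _ t * bnd_coef D i t _)).
exact: sum_bnd_coef_mul_eq0.
Qed.

Lemma chain_proj_diag D i : chain_proj K D i =
  diag_mx (\row_r ((enum_val r \in D) && (#|enum_val r| == i.+1))%:R).
Proof.
by apply/matrixP => r c; rewrite !mxE; case: eqVneq => [->|]; rewrite ?mulr1n ?mulr0n.
Qed.

Lemma chain_proj_mul_bnd D i : chain_proj K D i *m bnd K D i = bnd K D i.
Proof.
apply/matrixP => r c; rewrite chain_proj_diag mul_diag_mx !mxE.
case: (boolP (_ && _)) => [_|face_r]; first by rewrite mul1r.
rewrite mul0r; apply/esym/eqP/negPn/negP => /bnd_coef_neq0[rD _ cr _ _].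
by rewrite rD cr eqxx in face_r.
Qed.

Lemma bnd_mul_chain_proj D i : bnd K D i.+1 *m chain_proj K D i = bnd K D i.+1.
Proof.
apply/matrixP => r c; rewrite chain_proj_diag mul_mx_diag !mxE.
case: (boolP (_ && _)) => [_|face_c]; first by rewrite mulr1.
rewrite mulr0; apply/esym/eqP/negPn/negP => /bnd_coef_neq0[_ tD _ ct _].
by rewrite tD ct eqxx in face_c.
Qed.

Lemma mxrank_rhomology D i : is_simplicial_complex D ->
  (\rank (rhomology K D i) + \rank (bnd K D i) + \rank (bnd K D i.+1))%N =
  \rank (chain_proj K D i).
Proof.
move=> cD; have sub_BZ : (boundaries K D i <= cycles K D i)%MS.
  by rewrite /boundaries sub_capmx -{1}bnd_mul_chain_proj submxMl sub_kermx bnd_mul_bnd ?eqxx.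
have := mxrank_cap_compl (cycles K D i) (boundaries K D i).
have := mxrank_mul_ker (chain_proj K D i) (bnd K D i).
rewrite chain_proj_mul_bnd (capmx_idPr sub_BZ) /rhomology /cycles /boundaries; lia.
Qed.

End Boundary.

Definition facet n (D : {set {set 'I_n}}) (s : {set 'I_n}) : Prop :=
  s \in D /\ forall t, t \in D -> s \subset t -> t = s.

Section FacetRemoval.
Variables (K : fieldType) (n : nat).
Implicit Types (D : {set {set 'I_n}}) (s t : {set 'I_n}).

Lemma simplicial_complex_setD1 D s : is_simplicial_complex D -> facet D s ->
  is_simplicial_complex (D :\ s).
Proof.
move=> cD [_ s_max] t u /setD1P[ts tD] ut; rewrite !inE (cD t u) // andbT.
by apply: contra_neq ts => us; rewrite -(s_max t) // -us.
Qed.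

Lemma chain_proj_setD1 D s i :
  chain_proj K (D :\ s) i = zero_row (chain_proj K D i) (enum_rank s).
Proof.
apply/matrixP => r c; rewrite !mxE eq_enum_rank !inE.
by case: (enum_val r == s); rewrite ?andbF.
Qed.

Lemma bnd_setD1 D s i : facet D s -> bnd K (D :\ s) i = zero_row (bnd K D i) (enum_rank s).
Proof.
move=> [_ s_max]; apply/matrixP => r c; rewrite !mxE eq_enum_rank.
rewrite /bnd_coef !inE; case: (enum_val r =P s) => //= /eqP rs.
case: (enum_val c =P s) => //= cs; rewrite andbF /=; case: and5P => // [[rD _ _ _]].
by rewrite cs => /(s_max _ rD) /eqP; rewrite (negPf rs).
Qed.

Lemma bnd_setD1_card D s i : facet D s -> #|s| != i.+1 -> bnd K (D :\ s) i = bnd K D i.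
Proof.
move=> s_facet cs; rewrite bnd_setD1 // zero_row_id //.
apply/matrixP => a c; rewrite !mxE enum_rankK; apply/eqP/negPn/negP.
by case/bnd_coef_neq0 => _ _ cs' _ _; rewrite cs' eqxx in cs.
Qed.

Lemma mxrank_chain_proj_setD1 D s i : s \in D ->
  \rank (chain_proj K D i) = (\rank (chain_proj K (D :\ s) i) + (#|s| == i.+1))%N.
Proof.
move=> sD; rewrite chain_proj_setD1; case: eqP => cs; last first.
  rewrite addn0 zero_row_id //; apply/matrixP => a c; rewrite !mxE enum_rankK.
  by move/eqP/negPf: cs => ->; rewrite !andbF.
rewrite addn1; apply: (mxrank_zero_row_pivot (c := enum_rank s)) => [|r].
  by rewrite mxE enum_rankK sD cs !eqxx oner_eq0.
by rewrite mxE => /negPf->.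
Qed.

End FacetRemoval.

Section Collapse.
Variables (K : fieldType) (n : nat) (D : {set {set 'I_n}}).
Variables (S : {set 'I_n}) (v : 'I_n) (k : nat).
Hypotheses (cD : is_simplicial_complex D) (S_facet : facet D S) (vS : v \in S)
  (free_facet : facet (D :\ S) (S :\ v)) (cardS : #|S| = k.+2).

Let cardF : #|S :\ v| = k.+1. Proof. exact: card_setD1S vS cardS. Qed.

Let coef_S : bnd_coef K D k.+1 S (S :\ v) = face_sign K S v.
Proof. by rewrite bnd_coef_setD1 //; [case: S_facet | case/setD1P: free_facet.1]. Qed.

Lemma mxrank_bnd_collapse_top :
  \rank (bnd K D k.+1) = (\rank (bnd K (D :\ S) k.+1)).+1.
Proof.
rewrite (bnd_setD1 K _ S_facet); apply: (mxrank_zero_row_pivot (c := enum_rank (S :\ v))).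
  by rewrite bndE !enum_rankK coef_S face_sign_neq0.
move=> r; rewrite eq_enum_rank bndE enum_rankK => rS; apply/eqP/negPn/negP.
case/bnd_coef_neq0=> rD _ cr _ [x _ Fx].
have rF : enum_val r = S :\ v by apply: free_facet.2; rewrite ?inE ?rS // Fx subD1set.
by move: cr; rewrite rF cardF => /eqP; rewrite eqSS (ltn_eqF (ltnSn k)).
Qed.

(* Row [S :\ v] of [bnd k] is redundant: row [S] of [bnd k.+1] is a relation
   between the rows of [bnd k] with the nonzero coefficient [face_sign S v] on it. *)
Lemma mxrank_bnd_collapse_free : \rank (bnd K (D :\ S :\ (S :\ v)) k) = \rank (bnd K D k).
Proof.
rewrite (bnd_setD1 K _ free_facet) (bnd_setD1_card K S_facet); last first.
  by rewrite cardS eqSS (gtn_eqF (ltnSn k)).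
apply/mxrank_zero_row/(row_sub_zero_row_rel (x := row (enum_rank S) (bnd K D k.+1))).
  by rewrite -row_mul bnd_mul_bnd // row0.
by rewrite mxE bndE !enum_rankK coef_S face_sign_neq0.
Qed.

Lemma mxrank_rhomology_collapse i :
  \rank (rhomology K (D :\ S :\ (S :\ v)) i) = \rank (rhomology K D i).
Proof.
have cD1 := simplicial_complex_setD1 cD S_facet.
have cD2 := simplicial_complex_setD1 cD1 free_facet.
have rank_chain : \rank (chain_proj K D i) =
    (\rank (chain_proj K (D :\ S :\ (S :\ v)) i) + (i == k) + (i == k.+1))%N.
  rewrite (mxrank_chain_proj_setD1 K _ S_facet.1) (mxrank_chain_proj_setD1 K _ free_facet.1).
  by rewrite cardS cardF !eqSS eq_sym [(k.+1 == i)]eq_sym.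
have rank_bnd j : \rank (bnd K D j) =
    (\rank (bnd K (D :\ S :\ (S :\ v)) j) + (j == k.+1))%N.
  have [->|jk1] := eqVneq j k.+1.
    rewrite mxrank_bnd_collapse_top (bnd_setD1_card K free_facet) ?addn1 //.
    by rewrite cardF eqSS (ltn_eqF (ltnSn k)).
  rewrite addn0; have [->|jk] := eqVneq j k; first by rewrite mxrank_bnd_collapse_free.
  by rewrite !bnd_setD1_card ?cardS ?cardF ?eqSS // eq_sym.
have := mxrank_rhomology K i cD; have := mxrank_rhomology K i cD2.
rewrite rank_chain !rank_bnd eqSS.
by case: (i == k); case: (i == k.+1); lia.
Qed.

End Collapse.

Section ConeApex.
Variables (n : nat) (D : {set {set 'I_n}}) (x a : 'I_n).
Hypotheses (cD : is_simplicial_complex D) (a_neq_x : a != x)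
  (cone_a : forall s, s \in D -> x \in s -> a |: s \in D).

Lemma cone_apex_facet S : S \in D -> x \in S ->
    (forall t, t \in D -> x \in t -> #|t| <= #|S|)%N ->
  [/\ facet D S, a \in S & facet (D :\ S) (S :\ a)].
Proof.
move=> SD xS S_max.
have S_facet : facet D S.
  split=> // t tD St; apply/eqP; rewrite eq_sym eqEcard St S_max //.
  exact: subsetP St x xS.
have aS : a \in S by rewrite -(S_facet.2 _ (cone_a SD xS) (subsetUr _ _)) setU11.
have xF : x \in S :\ a by rewrite !inE eq_sym a_neq_x.
split=> //; split=> [|t /setD1P[tS tD] Ft].
  by rewrite !inE (cD SD (subD1set S a)) andbT; apply/eqP => /setP/(_ a); rewrite !inE eqxx aS.
have atS : a |: t = S.
  by apply: S_facet.2; rewrite ?cone_a ?(subsetP Ft) // -{1}(setD1K aS) setUS.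
have tS' : t \subset S by rewrite -atS subsetUr.
by case: (setD1_sandwich tS' Ft) => // tE; rewrite tE eqxx in tS.
Qed.

Lemma cone_apex_collapse S : facet D S -> a \in S -> facet (D :\ S) (S :\ a) ->
  forall s, s \in D :\ S :\ (S :\ a) -> x \in s -> a |: s \in D :\ S :\ (S :\ a).
Proof.
move=> S_facet aS F_facet s /setD1P[s_neq_F /setD1P[s_neq_S sD]] xs.
rewrite !inE cone_a // andbT; apply/andP; split.
  by apply/eqP => /setP/(_ a); rewrite !inE eqxx.
apply/eqP => asS; have sS : s \subset S by rewrite -asS subsetUr.
have Fs : S :\ a \subset s by rewrite -asS subDset.
by case: (setD1_sandwich sS Fs) => sE; [move: s_neq_S | move: s_neq_F]; rewrite sE eqxx.
Qed.

End ConeApex.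

(* A largest face [S] containing [x] is a facet and [S :\ a] is free in it, so
   the pair can be collapsed; this lowers the number of faces containing [x]. *)
Lemma mxrank_rhomology_delete_vertex (K : fieldType) n (D : {set {set 'I_n}}) (x a : 'I_n) i :
  is_simplicial_complex D -> a != x -> (forall s, s \in D -> x \in s -> a |: s \in D) ->
  \rank (rhomology K [set s in D | x \notin s] i) = \rank (rhomology K D i).
Proof.
move=> + a_neq_x; have [N] := ubnP #|[set s in D | x \in s]|; elim: N D => // N IH D.
move=> /ltnSE star_le cD cone_a.
have [star0 | [s0 s0_star]] := set_0Vmem [set s in D | x \in s].
  congr (\rank (rhomology K _ i)); apply/setP => s; rewrite inE.
  case: (boolP (s \in D)) => //= sD; apply/negP => xs.
  by have := in_set0 s; rewrite -star0 inE sD xs.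
move: s0_star; rewrite inE => s0_star.
have [S /andP[SD xS] S_max] :=
  @arg_maxnP _ s0 [pred s | (s \in D) && (x \in s)] (fun s => #|s|) s0_star.
have [|S_facet aS F_facet] := cone_apex_facet cD a_neq_x cone_a SD xS.
  by move=> t tD xt; apply: S_max; rewrite /= tD xt.
have cardS : #|S| = (#|S| - 2).+2.
  suff : (1 < #|S|)%N by lia.
  by rewrite (cardsD1 a) aS (cardsD1 x) !inE eq_sym a_neq_x xS.
rewrite -(mxrank_rhomology_collapse K cD S_facet aS F_facet cardS).
have -> : [set s in D | x \notin s] = [set s in D :\ S :\ (S :\ a) | x \notin s].
  apply/setP => s; rewrite !inE; case: (boolP (x \in s)) => xs; rewrite ?andbF //= andbT.
  have sS : s != S by apply: contraNneq xs => ->.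
  have sF : s != S :\ a by apply: contraNneq xs => ->; rewrite !inE xS eq_sym a_neq_x.
  by rewrite sS sF andbT.
apply: IH.
- apply: leq_trans star_le; apply: proper_card; apply/properP; split.
    by apply/subsetP => s; rewrite !inE => /andP[/and3P[_ _ ->] ->].
  by exists S; rewrite !inE ?SD ?xS ?eqxx ?andbF.
- exact: simplicial_complex_setD1 (simplicial_complex_setD1 cD S_facet) F_facet.
- exact: cone_apex_collapse.
Qed.

Section Relabel.
Variables (K : fieldType) (n : nat) (p : {perm 'I_n}).
Implicit Types (D : {set {set 'I_n}}) (s t : {set 'I_n}) (v w : 'I_n).

Lemma mem_imset_perm s v : (p v \in p @: s) = (v \in s).
Proof. exact: mem_imset (@perm_inj _ p). Qed.

Lemma imset_perm_subset s t : (p @: t \subset p @: s) = (t \subset s).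
Proof.
apply/idP/idP => [sub_pts|]; last exact: imsetS.
by apply/subsetP => v vt; rewrite -mem_imset_perm (subsetP sub_pts) ?mem_imset_perm.
Qed.

Lemma imset_permD s t : p @: s :\: p @: t = p @: (s :\: t).
Proof. by apply/setP => w; rewrite -[w](permKV p) !inE !mem_imset_perm inE. Qed.

Definition inversions s : nat :=
  \sum_(u in s) \sum_(w in s) ((val u < val w) && (val (p w) < val (p u))).

(* The sign of the bijection that [p] induces from [s] onto [p @: s], both
   ordered increasingly; these signs make relabelling a chain map. *)
Definition relabel_sign s : K := (-1) ^+ inversions s.

Lemma inversions_setD1 s v : v \in s -> inversions s =
  (\sum_(w in s) ((val v < val w) && (val (p w) < val (p v))) +
   \sum_(u in s) ((val u < val v) && (val (p v) < val (p u))) + inversions (s :\ v))%N.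
Proof.
move=> vs; rewrite /inversions (big_setD1 v vs) /= -addnA; congr (_ + _)%N.
under eq_bigr do rewrite (big_setD1 v vs).
by rewrite big_split /= [in RHS](big_setD1 v vs) /= ltnn.
Qed.

Lemma face_sign_imset s v :
  face_sign K (p @: s) (p v) = (-1) ^+ (\sum_(w in s) (val (p w) < val (p v)))%N.
Proof.
rewrite /face_sign -card_set_sum; congr (_ ^+ _).
have -> : [set w in p @: s | (val w < val (p v))%N] =
          p @: [set w in s | (val (p w) < val (p v))%N].
  by apply/setP => w; rewrite -[w](permKV p) !inE !mem_imset_perm inE permKV.
exact: card_imset (@perm_inj _ p).
Qed.

Lemma relabel_sign_face_sign s v : v \in s ->
  relabel_sign s * face_sign K (p @: s) (p v) = face_sign K s v * relabel_sign (s :\ v).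
Proof.
move=> vs; rewrite /relabel_sign face_sign_imset /face_sign card_set_sum -!exprD.
rewrite (inversions_setD1 vs).
set B := (\sum_(w in s) ((val v < val w) && _))%N.
set A := (\sum_(u in s) ((val u < val v) && _))%N.
set C := (\sum_(w in s) (val (p w) < val (p v)))%N.
set L := (\sum_(w in s) (val w < val v))%N.
have ABC : (A + B + C = L + (B + B))%N.
  rewrite /A /B /C /L -!big_split /=; apply: eq_bigr => w _.
  case: (ltngtP (val w) (val v)) => [||/val_inj->]; case: (ltngtP (val (p w)) (val (p v))) => //=;
    by rewrite ?ltnn // => /val_inj/perm_inj->; rewrite ltnn.
have -> : (B + A + inversions (s :\ v) + C = L + inversions (s :\ v) + (B + B))%N by lia.
by rewrite exprD addnn -mul2n exprM sqrrN !expr1n mulr1.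
Qed.

Definition relabel_index (r : 'I_(NS n)) : 'I_(NS n) := enum_rank (p @: enum_val r).

Lemma relabel_index_inj : injective relabel_index.
Proof. by move=> r1 r2 /enum_rank_inj/(imset_inj (@perm_inj _ p))/enum_val_inj. Qed.

Definition relabel_perm : {perm 'I_(NS n)} := perm relabel_index_inj.

Lemma relabel_permE r : enum_val (relabel_perm r) = p @: enum_val r.
Proof. by rewrite permE enum_rankK. Qed.

Definition relabel_mx : 'M[K]_(NS n) :=
  diag_mx (\row_r relabel_sign (enum_val r)) *m perm_mx relabel_perm.

Lemma relabel_mx_unit : relabel_mx \in unitmx.
Proof.
rewrite unitmx_mul unitmx_perm andbT unitmxE det_diag unitfE.
by apply/prodf_neq0 => r _; rewrite mxE expf_neq0 // oppr_eq0 oner_eq0.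
Qed.

Lemma mxrank_relabel_mull m (X : 'M[K]_(NS n, m)) : \rank (relabel_mx *m X) = \rank X.
Proof. by rewrite eqmxMfull // row_full_unit relabel_mx_unit. Qed.

Lemma mxrank_relabel_mulr m (X : 'M[K]_(m, NS n)) : \rank (X *m relabel_mx) = \rank X.
Proof. by rewrite mxrankMfree // row_free_unit relabel_mx_unit. Qed.

Lemma relabel_mx_conj (B B0 : 'M[K]_(NS n)) :
    (forall r c, relabel_sign (enum_val r) * B (relabel_perm r) (relabel_perm c) =
                 B0 r c * relabel_sign (enum_val c)) ->
  relabel_mx *m B = B0 *m relabel_mx.
Proof.
move=> BB0; apply/matrixP => r c.
have mul_perm_mx (A : 'M[K]_(NS n)) : A *m perm_mx relabel_perm = col_perm relabel_perm^-1 A.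
  by rewrite col_permE invgK.
rewrite -mulmxA -row_permE mulmxA mul_perm_mx.
rewrite mul_diag_mx [RHS]mxE mul_mx_diag !mxE -{1}[c](permKV relabel_perm).
exact: BB0.
Qed.

Section Image.
Variables D D0 : {set {set 'I_n}}.
Hypothesis relabel_D : forall s, (p @: s \in D) = (s \in D0).

Lemma relabel_bnd_coef i s t :
  relabel_sign s * bnd_coef K D i (p @: s) (p @: t) = bnd_coef K D0 i s t * relabel_sign t.
Proof.
rewrite /bnd_coef !relabel_D !(card_imset _ (@perm_inj _ p)) imset_perm_subset.
case: and5P => [[sD tD /eqP cs /eqP ct ts]|_]; last by rewrite mulr0 mul0r.
have [x xs ->] := setD1_of_card ts (etrans cs (congr1 S (esym ct))).
by rewrite imset_permD !setDD1 // imset_set1 !big_set1 relabel_sign_face_sign.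
Qed.

Lemma relabel_mx_bnd i : relabel_mx *m bnd K D i = bnd K D0 i *m relabel_mx.
Proof. by apply: relabel_mx_conj => r c; rewrite !bndE !relabel_permE relabel_bnd_coef. Qed.

Lemma relabel_mx_chain_proj i : relabel_mx *m chain_proj K D i = chain_proj K D0 i *m relabel_mx.
Proof.
apply: relabel_mx_conj => r c; rewrite !mxE (inj_eq perm_inj) relabel_permE relabel_D.
rewrite (card_imset _ (@perm_inj _ p)); case: eqP => [->|_]; last by rewrite mulr0 mul0r.
exact: mulrC.
Qed.

Lemma mxrank_rhomology_relabel i : is_simplicial_complex D -> is_simplicial_complex D0 ->
  \rank (rhomology K D i) = \rank (rhomology K D0 i).
Proof.
move=> cD cD0; have := mxrank_rhomology K i cD; have := mxrank_rhomology K i cD0.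
rewrite -(mxrank_relabel_mull (bnd K D i)) -(mxrank_relabel_mull (bnd K D i.+1)).
rewrite -(mxrank_relabel_mull (chain_proj K D i)) relabel_mx_bnd relabel_mx_bnd.
rewrite relabel_mx_chain_proj !mxrank_relabel_mulr; lia.
Qed.

End Image.
End Relabel.

Section Cone.
Variable n : nat.
Implicit Types (X s F : {set 'I_n}) (D : {set {set 'I_n}}) (x a : 'I_n).

Lemma in_cone s X D : reflect (exists2 F, F \in D & s \subset X :|: F) (s \in cone X D).
Proof. by rewrite inE; apply: exists_inP. Qed.

Lemma cone_closed X D : is_simplicial_complex (cone X D).
Proof.
move=> s t /in_cone[F FD sF] ts; apply/in_cone; exists F => //; exact: subset_trans ts sF.
Qed.

Lemma setU1_cone a s X D : a \in X -> s \in cone X D -> a |: s \in cone X D.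
Proof.
move=> aX /in_cone[F FD sF]; apply/in_cone; exists F => //.
by rewrite subUset sub1set inE aX.
Qed.

Lemma notin_vertex_set x D F : x \notin vertex_set D -> F \in D -> x \notin F.
Proof. by move=> xD FD; apply: contra xD => xF; apply/bigcupP; exists F. Qed.

Lemma cone_notin x s X D :
  x \notin vertex_set D -> x \notin X -> x \in s -> s \notin cone X D.
Proof.
move=> xD xX xs; apply/in_cone => -[F FD /subsetP/(_ x xs)].
by rewrite inE (negPf xX) (negPf (notin_vertex_set xD FD)).
Qed.

Lemma cone_setD1 x X D :
  x \notin vertex_set D -> [set s in cone X D | x \notin s] = cone (X :\ x) D.
Proof.
move=> xD; apply/setP => s; rewrite inE; apply/andP/in_cone.
  case=> /in_cone[F FD sF] xs; exists F => //; apply/subsetP => y ys.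
  have yx : y != x by apply: contraNneq xs => <-.
  by move: (subsetP sF y ys); rewrite !inE yx.
case=> F FD sF; split.
  by apply/in_cone; exists F => //; rewrite (subset_trans sF) ?setSU ?subD1set.
by apply: contra (notin_vertex_set xD FD) => xs; move: (subsetP sF x xs); rewrite !inE eqxx.
Qed.

Lemma cone_imset_perm (p : {perm 'I_n}) X D s : {in vertex_set D, p =1 id} ->
  (p @: s \in cone (p @: X) D) = (s \in cone X D).
Proof.
move=> pV; have pF F : F \in D -> p @: F = F.
  move=> FD; rewrite -[RHS]imset_id; apply: eq_in_imset => y yF; apply: pV.
  by apply/bigcupP; exists F.
have subE F : F \in D -> (p @: s \subset p @: X :|: F) = (s \subset X :|: F).
  by move=> FD; rewrite -{1}(pF F FD) -imsetU imset_perm_subset.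
by apply/in_cone/in_cone => -[F FD sF]; exists F; rewrite // ?subE // -subE.
Qed.

End Cone.

Lemma vertex_setU n (D D' : {set {set 'I_n}}) :
  vertex_set (D :|: D') = vertex_set D :|: vertex_set D'.
Proof. exact: bigcup_setU. Qed.

Section DeltaAB.
Variables (n : nat) (D1 D2 D3 : {set {set 'I_n}}).
Let V := vertex_set (D1 :|: D2 :|: D3).
Implicit Types (A B : {set 'I_n}) (x a : 'I_n).

Lemma DeltaAB_closed A B : is_simplicial_complex (DeltaAB D1 D2 D3 A B).
Proof.
move=> s t; rewrite !in_setU -!orbA => /or3P[] /cone_closed sD /sD ->; rewrite ?orbT //.
Qed.

Lemma DeltaAB_swap A B : DeltaAB D1 D2 D3 A B = DeltaAB D2 D1 D3 B A.
Proof. by rewrite /DeltaAB (setUC (cone A D1)) (setUC A). Qed.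

Lemma notin_vertex_setU x : x \notin V ->
  [/\ x \notin vertex_set D1, x \notin vertex_set D2 & x \notin vertex_set D3].
Proof. by rewrite /V !vertex_setU !inE !negb_or => /andP[/andP[]]. Qed.

Lemma DeltaAB_setD1 A B x : x \notin V ->
  [set s in DeltaAB D1 D2 D3 A B | x \notin s] = DeltaAB D1 D2 D3 (A :\ x) (B :\ x).
Proof.
case/notin_vertex_setU=> x1 x2 x3; rewrite /DeltaAB -setDUl.
rewrite -(cone_setD1 A x1) -(cone_setD1 B x2) -(cone_setD1 (A :|: B) x3).
by apply/setP => s; rewrite !inE !andb_orl.
Qed.

Lemma mxrank_rhomology_DeltaAB_delete K A B x a i :
  x \notin V -> x \notin B -> a \in A -> a != x ->
  \rank (rhomology K (DeltaAB D1 D2 D3 (A :\ x) B) i) =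
  \rank (rhomology K (DeltaAB D1 D2 D3 A B) i).
Proof.
move=> xV xB aA a_neq_x; have [_ x2 _] := notin_vertex_setU xV.
have BxE : B :\ x = B by apply/setDidPl; rewrite disjoint_sym disjoints1.
rewrite -{1}BxE -DeltaAB_setD1 //.
apply: (mxrank_rhomology_delete_vertex _ _ (@DeltaAB_closed A B) a_neq_x).
move=> s; rewrite /DeltaAB !in_setU -!orbA => /or3P[sD|sD|sD] xs.
- by rewrite setU1_cone.
- by rewrite (negPf (cone_notin x2 xB xs)) in sD.
- by rewrite (setU1_cone _ sD) ?orbT // inE aA.
Qed.

Lemma mxrank_rhomology_DeltaAB_set1l K A B a i :
  a \in A -> [disjoint A & B] -> [disjoint A & V] ->
  \rank (rhomology K (DeltaAB D1 D2 D3 A B) i) =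
  \rank (rhomology K (DeltaAB D1 D2 D3 [set a] B) i).
Proof.
have [N] := ubnP #|A|; elim: N A => // N IH A /ltnSE cardA aA AB AV.
have [Aa0 | [x /setD1P[x_neq_a xA]]] := set_0Vmem (A :\ a).
  by rewrite -(setD1K aA) Aa0 setU0.
have [xV xB] := (negbT (disjointFr AV xA), negbT (disjointFr AB xA)).
rewrite -(mxrank_rhomology_DeltaAB_delete K i xV xB aA); last by rewrite eq_sym.
rewrite IH ?(disjointWl (subD1set A x)) //; last by rewrite !inE eq_sym x_neq_a.
by rewrite (leq_trans _ cardA) // (cardsD1 x A) xA.
Qed.

Lemma mxrank_rhomology_DeltaAB_relabel K (p : {perm 'I_n}) A B i : {in V, p =1 id} ->
  \rank (rhomology K (DeltaAB D1 D2 D3 (p @: A) (p @: B)) i) =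
  \rank (rhomology K (DeltaAB D1 D2 D3 A B) i).
Proof.
move=> pV.
apply: (@mxrank_rhomology_relabel K n p) (@DeltaAB_closed _ _) (@DeltaAB_closed _ _) => s.
rewrite /DeltaAB !in_setU -imsetU !cone_imset_perm // => y yD; apply: pV;
  by rewrite /V !vertex_setU !inE yD ?orbT.
Qed.

Lemma mxrank_rhomology_DeltaAB_points K a b a' b' i :
  a \notin V -> b \notin V -> a' \notin V -> b' \notin V -> a != b -> a' != b' ->
  \rank (rhomology K (DeltaAB D1 D2 D3 [set a] [set b]) i) =
  \rank (rhomology K (DeltaAB D1 D2 D3 [set a'] [set b']) i).
Proof.
move=> aV bV a'V b'V a_neq_b a'_neq_b'.
have tperm_V x y : x \notin V -> y \notin V -> {in V, tperm x y =1 id}.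
  move=> xV yV z zV; have neq_z w : w \notin V -> w != z by apply: contraNneq => ->.
  by rewrite tpermD ?neq_z.
set b1 := tperm a a' b.
have b1V : b1 \notin V by rewrite /b1; case: tpermP.
have a'_neq_b1 : a' != b1 by rewrite -(tpermL a a') (inj_eq perm_inj).
rewrite -(mxrank_rhomology_DeltaAB_relabel K [set a] [set b] i (tperm_V _ _ aV a'V)).
rewrite !imset_set1 tpermL -/b1.
rewrite -(mxrank_rhomology_DeltaAB_relabel K [set a'] [set b1] i (tperm_V _ _ b1V b'V)).
by rewrite !imset_set1 tpermL tpermD // eq_sym.
Qed.

End DeltaAB.

Lemma mxrank_rhomology_DeltaAB_set1 (K : fieldType) n (D1 D2 D3 : {set {set 'I_n}})
    (A B : {set 'I_n}) (a b : 'I_n) i :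
  a \in A -> b \in B -> [disjoint A & B] ->
  [disjoint A :|: B & vertex_set (D1 :|: D2 :|: D3)] ->
  \rank (rhomology K (DeltaAB D1 D2 D3 A B) i) =
  \rank (rhomology K (DeltaAB D1 D2 D3 [set a] [set b]) i).
Proof.
move=> aA bB AB ABV.
have AV := disjointWl (subsetUl A B) ABV; have BV := disjointWl (subsetUr A B) ABV.
rewrite (mxrank_rhomology_DeltaAB_set1l K i aA AB AV) DeltaAB_swap.
rewrite (mxrank_rhomology_DeltaAB_set1l K i bB); first by rewrite DeltaAB_swap.
  by rewrite disjoint_sym disjoints1 (disjointFr AB aA).
by rewrite (setUC D2).
Qed.

Theorem proposition3p4 (K : fieldType) (n : nat) (D1 D2 D3 : {set {set 'I_n}})
  (A B A' B' : {set 'I_n}) :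
  is_simplicial_complex D1 -> is_simplicial_complex D2 -> is_simplicial_complex D3 ->
  A != set0 -> B != set0 -> A' != set0 -> B' != set0 ->
  [disjoint A & B] -> [disjoint A' & B'] ->
  [disjoint A :|: B & vertex_set (D1 :|: D2 :|: D3)] ->
  [disjoint A' :|: B' & vertex_set (D1 :|: D2 :|: D3)] ->
  forall i : nat, (0 < i)%N ->
    mxspace_iso (rhomology K (DeltaAB D1 D2 D3 A B) i)
                (rhomology K (DeltaAB D1 D2 D3 A' B') i).
Proof.
move=> _ _ _ /set0Pn[a aA] /set0Pn[b bB] /set0Pn[a' aA'] /set0Pn[b' bB'] AB A'B' ABV A'B'V i _.
apply: mxspace_iso_rank.
rewrite (mxrank_rhomology_DeltaAB_set1 K i aA bB AB ABV).
rewrite (mxrank_rhomology_DeltaAB_set1 K i aA' bB' A'B' A'B'V).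
have [aV bV a_neq_b] := disjoint_setU_mem aA bB AB ABV.
have [a'V b'V a'_neq_b'] := disjoint_setU_mem aA' bB' A'B' A'B'V.
exact: mxrank_rhomology_DeltaAB_points.
Qed.
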